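(* For every $n\ge1$, the $\{\mathbf{3},\mathbf{2}+\mathbf{2}\}$-free naturally labelled posets on $[n]$ are in bijection with the labelled binary words of length $n$ satisfying all of the following: (1) the first letter is $\mathsf0$; (2) whenever two consecutive letters are both $\mathsf0$, their labels are decreasing; (3) whenever two consecutive letters are both $\mathsf1$, their labels are increasing; (4) the label of every $\mathsf1$ is greater than the labels of all $\mathsf0$s occurring earlier in the word.
   Context: A partial order $\preceq$ on $[n]$ is naturally labelled if $x\prec y$ implies $x<y$. It is $\mathbf{3}$-free if there are no $x\prec y\prec z$. It is $(\mathbf{2}+\mathbf{2})$-free if it has no induced subposet consisting of two disjoint $2$-element chains, i.e. no distinct $i\prec j$, $k\prec\ell$ with each of $i,j$ incomparable to each of $k,\ell$. A labelled binary word of length $n$ is a word $w_1\cdots w_n$ over $\{\mathsf0,\mathsf1\}$ together with a bijective assignment of labels from $[n]$ to its positions. *)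

From mathcomp Require Import all_boot all_fingroup.
Set Implicit Arguments. Unset Strict Implicit. Unset Printing Implicit Defensive.

(* The ground set [n] = {1,...,n} is represented by 'I_n = {0,...,n-1}
   (order-preserving shift by one). *)

Definition rle n (R : {set 'I_n * 'I_n}) (x y : 'I_n) : bool := (x, y) \in R.
Definition rlt n (R : {set 'I_n * 'I_n}) (x y : 'I_n) : bool := (x != y) && rle R x y.
Definition rcomparable n (R : {set 'I_n * 'I_n}) (x y : 'I_n) : bool :=
  rle R x y || rle R y x.

Definition is_partial_order n (R : {set 'I_n * 'I_n}) : Prop :=
  [/\ forall x, rle R x x,
      forall x y, rle R x y -> rle R y x -> x = y &
      forall x y z, rle R x y -> rle R y z -> rle R x z].

Definition naturally_labelled n (R : {set 'I_n * 'I_n}) : Prop :=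
  forall x y, rlt R x y -> (x < y)%N.

Definition three_free n (R : {set 'I_n * 'I_n}) : Prop :=
  ~ exists x y z, [/\ rlt R x y & rlt R y z].

Definition two_plus_two_free n (R : {set 'I_n * 'I_n}) : Prop :=
  ~ exists i j k l : 'I_n,
      [/\ uniq [:: i; j; k; l], rlt R i j, rlt R k l &
          [/\ ~~ rcomparable R i k, ~~ rcomparable R i l,
              ~~ rcomparable R j k & ~~ rcomparable R j l]].

Definition good_poset n (R : {set 'I_n * 'I_n}) : Prop :=
  [/\ is_partial_order R, naturally_labelled R, three_free R & two_plus_two_free R].

(* A labelled binary word of length n: letters w : positions -> bool
   (false = letter 0, true = letter 1) and a bijective labelling
   lab : positions -> labels, i.e. a permutation of 'I_n. *)
Definition labelled_word n := ({ffun 'I_n -> bool} * {perm 'I_n})%type.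

Definition good_word n (p : labelled_word n) : Prop :=
  let w := p.1 in let lab := p.2 in
  [/\
      forall i : 'I_n, val i = 0 -> w i = false,
      forall i j : 'I_n, val j = (val i).+1 -> w i = false -> w j = false ->
        (val (lab j) < val (lab i))%N,
      forall i j : 'I_n, val j = (val i).+1 -> w i = true -> w j = true ->
        (val (lab i) < val (lab j))%N &
      forall i j : 'I_n, (val i < val j)%N -> w i = false -> w j = true ->
        (val (lab i) < val (lab j))%N].

From mathcomp Require Import all_boot all_fingroup zify.
From Stdlib Require Import ProofIrrelevance.
Set Implicit Arguments. Unset Strict Implicit. Unset Printing Implicit Defensive.

(* A {3, 2+2}-free poset has height at most two: its minimal elements become the
   letters 0, the other elements the letters 1, and x < y holds exactly when x is
   a 0 written before the 1 y.  Since the poset is (2+2)-free, the strict up-sets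
   form a chain, so for minimal x, x < y is decided by comparing #|up x| with the
   number of y' whose down-set contains that of y.  Sorting the elements by this
   common score (minimal elements first at equal score, then by decreasing labels
   among minimal and increasing labels among non-minimal elements) produces the
   word.  Conversely, sorting the poset of a word reproduces the word: inside a
   run of equal letters the labels are ordered by conditions (2) and (3), and a
   letter of the other kind between two positions makes the scores differ. *)

Lemma ltn_lex n c1 c2 r1 r2 : (r1 < n)%N -> (r2 < n)%N ->
  (c1 * n + r1 < c2 * n + r2)%N = (c1 < c2)%N || (c1 == c2) && (r1 < r2)%N.
Proof.
move=> lt_r1 lt_r2; case: (ltngtP c1 c2) => [lt_c|lt_c|->] /=; last by lia.
- have : (c1.+1 * n <= c2 * n)%N by rewrite leq_mul2r lt_c orbT.
  by rewrite mulSn; lia.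
- have : (c2.+1 * n <= c1 * n)%N by rewrite leq_mul2r lt_c orbT.
  by rewrite mulSn; lia.
Qed.

Lemma card_ord_prefix n k : (k <= n)%N -> #|[set i : 'I_n | (i < k)%N]| = k.
Proof.
move=> le_kn; rewrite -sum1_card (eq_bigl (fun i : 'I_n => (i < k)%N)) => [|i]; last first.
  by rewrite inE.
by rewrite (big_ord_narrow le_kn) sum1_card card_ord.
Qed.

Lemma card_le_ord n (A : {set 'I_n}) : (#|A| <= n)%N.
Proof. by rewrite -[n in (_ <= n)%N]card_ord max_card. Qed.

Section Ranking.
Variables (n : nat) (key : 'I_n -> nat).
Hypothesis key_inj : injective key.

Definition rank x := #|[set y | (key y < key x)%N]|.

Lemma rank_lt x : (rank x < n)%N.
Proof.
have : [set y | (key y < key x)%N] \subset [set~ x].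
  by apply/subsetP => y; rewrite !inE; apply: contraTneq => ->; rewrite ltnn.
by move/subset_leq_card; rewrite cardsC1 card_ord /rank; have := ltn_ord x; lia.
Qed.

Lemma ltn_rank x y : (rank x < rank y)%N = (key x < key y)%N.
Proof.
have rank_mono a b : (key a < key b)%N -> (rank a < rank b)%N.
  move=> lt_ab; apply: proper_card; apply/properP; split.
    by apply/subsetP => z; rewrite !inE => /ltn_trans; apply.
  by exists a; rewrite !inE ?ltnn.
apply/idP/idP; last exact: rank_mono.
case: (ltngtP (key x) (key y)) => // [/rank_mono|/key_inj ->]; lia.
Qed.

Lemma rank_ord_inj : injective (fun x => Ordinal (rank_lt x)).
Proof.
move=> x y [] eq_xy; apply: key_inj; apply/eqP.
by rewrite eqn_leq leqNgt -ltn_rank eq_xy ltnn leqNgt -ltn_rank eq_xy ltnn.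
Qed.

Definition rank_perm : {perm 'I_n} := perm rank_ord_inj.

Lemma rank_permE x : val (rank_perm x) = rank x.
Proof. by rewrite permE. Qed.

Lemma rank_perm_unique (p : {perm 'I_n}) :
  (forall x y, (p x < p y)%N -> (key x < key y)%N) -> rank_perm = p.
Proof.
move=> p_mono; apply/permP => x; apply: val_inj; rewrite rank_permE /rank.
have -> : [set y | (key y < key x)%N] = p @^-1: [set i : 'I_n | (i < p x)%N].
  apply/setP => y; rewrite !inE; apply/idP/idP; last exact: p_mono.
  case: (ltngtP (p y) (p x)) => // [/p_mono|/val_inj/perm_inj ->]; last by rewrite ltnn.
  by move=> lt_xy /(ltn_trans lt_xy); rewrite ltnn.
by rewrite card_preimset ?card_ord_prefix //; [exact: ltnW | exact: perm_inj].
Qed.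

End Ranking.

Lemma run_trans n (T : Type) (r : rel T) (f : 'I_n -> T) (P : pred 'I_n) :
  transitive r ->
  (forall i j : 'I_n, val j = (val i).+1 -> P i -> P j -> r (f i) (f j)) ->
  forall i j : 'I_n, (i < j)%N -> (forall k : 'I_n, (i <= k <= j)%N -> P k) ->
  r (f i) (f j).
Proof.
move=> r_trans step i j lt_ij.
have [d] : exists d, nat_of_ord j = (i + d.+1)%N by exists (j - i).-1; lia.
elim: d j {lt_ij} => [|d IHd] j def_j Pij; first by apply: step; rewrite ?Pij //=; lia.
have lt_k : (i + d.+1 < n)%N by have := ltn_ord j; lia.
apply: (r_trans (f (Ordinal lt_k))); first by apply: IHd => // k /= le_k; apply: Pij; lia.
by apply: step; rewrite ?Pij //=; lia.
Qed.

Lemma run_or_gap n (P : pred 'I_n) (i j : 'I_n) : P i -> P j ->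
  (exists k : 'I_n, [/\ (i < k)%N, (k < j)%N & ~~ P k]) \/
  (forall k : 'I_n, (i <= k <= j)%N -> P k).
Proof.
move=> Pi Pj; case: (boolP [exists k : 'I_n, [&& (i < k)%N, (k < j)%N & ~~ P k]]).
  by case/existsP => k /and3P[lt_ik lt_kj nPk]; left; exists k.
move=> no_gap; right => k; rewrite leq_eqVlt => /andP[/orP[/eqP/ord_inj <- // | lt_ik]].
rewrite leq_eqVlt => /orP[/eqP/ord_inj -> // | lt_kj]; apply: contraR no_gap => nPk.
by apply/existsP; exists k; rewrite lt_ik lt_kj.
Qed.

Section PosetKey.
Variables (n : nat) (R : {set 'I_n * 'I_n}).

Definition has_lower x := [exists z, rlt R z x].
Definition up_set x := [set y | rlt R x y].
Definition down_set y := [set z | rlt R z y].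
Definition down_superset y := [set y' | down_set y \subset down_set y'].

Definition score x := if has_lower x then #|down_superset x| else #|up_set x|.
Definition tiebreak (x : 'I_n) := if has_lower x then val x else (n.-1 - x)%N.
(* Lexicographic in (decreasing score, minimal elements first, tiebreak). *)
Definition poset_key x := ((n - score x).*2 + has_lower x) * n + tiebreak x.

Lemma rlt_has_lower x y : rlt R x y -> has_lower y.
Proof. by move=> lt_xy; apply/existsP; exists x. Qed.

Lemma tiebreak_lt x : (tiebreak x < n)%N.
Proof. by have := ltn_ord x; rewrite /tiebreak; case: ifP => _ /=; lia. Qed.

Lemma poset_key_inj : injective poset_key.
Proof.
move=> x y eq_key; have n_gt0 : (0 < n)%N := leq_ltn_trans (leq0n _) (ltn_ord x).
have key_div z : odd (poset_key z %/ n) = has_lower z.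
  by rewrite divnMDl // divn_small ?tiebreak_lt // addn0 oddD odd_double oddb.
have key_mod z : poset_key z %% n = tiebreak z.
  by rewrite modnMDl modn_small ?tiebreak_lt.
have eq_hl : has_lower x = has_lower y by rewrite -!key_div eq_key.
have := key_mod x; rewrite eq_key key_mod /tiebreak -eq_hl.
by case: (has_lower x) => /= eq_t; apply: val_inj; move: eq_t (ltn_ord x) (ltn_ord y) => /=; lia.
Qed.

Lemma ltn_key_lower_upper x y : ~~ has_lower x -> has_lower y ->
  (poset_key x < poset_key y)%N = (#|down_superset y| <= #|up_set x|)%N.
Proof.
move=> /negbTE hx hy; rewrite /poset_key ltn_lex ?tiebreak_lt // /score hx hy /=.
by move: (card_le_ord (up_set x)) (card_le_ord (down_superset y)); move: #|_| #|_| => a b; lia.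
Qed.

Lemma ltn_key_lower x y : ~~ has_lower x -> ~~ has_lower y ->
  (poset_key x < poset_key y)%N =
  (#|up_set y| < #|up_set x|)%N || (#|up_set x| == #|up_set y|) && (y < x)%N.
Proof.
move=> /negbTE hx /negbTE hy.
rewrite /poset_key ltn_lex ?tiebreak_lt // /score /tiebreak hx hy /=.
move: (card_le_ord (up_set x)) (card_le_ord (up_set y)) (ltn_ord x) (ltn_ord y).
by move: #|up_set x| #|up_set y| (nat_of_ord x) (nat_of_ord y) => a b u v; lia.
Qed.

Lemma ltn_key_upper x y : has_lower x -> has_lower y ->
  (poset_key x < poset_key y)%N =
  (#|down_superset y| < #|down_superset x|)%N
  || (#|down_superset x| == #|down_superset y|) && (x < y)%N.
Proof.
move=> hx hy; rewrite /poset_key ltn_lex ?tiebreak_lt // /score /tiebreak hx hy /=.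
move: (card_le_ord (down_superset x)) (card_le_ord (down_superset y)).
by move: #|down_superset x| #|down_superset y| (nat_of_ord x) (nat_of_ord y) => a b u v; lia.
Qed.

Lemma ltn_poset_keyNge x y : x != y ->
  (poset_key y < poset_key x)%N = ~~ (poset_key x < poset_key y)%N.
Proof.
move=> ne_xy; case: ltngtP => // /poset_key_inj eq_xy.
by rewrite eq_xy eqxx in ne_xy.
Qed.

Definition poset_position := rank_perm poset_key_inj.

Lemma poset_positionE x : val (poset_position x) = rank poset_key x.
Proof. exact: rank_permE. Qed.

Lemma ltn_poset_position x y :
  (poset_position x < poset_position y)%N = (poset_key x < poset_key y)%N.
Proof. by rewrite !poset_positionE (ltn_rank poset_key_inj). Qed.

Definition word_of_poset : labelled_word n :=
  ([ffun i => has_lower (poset_position^-1 i)], poset_position^-1)%g.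

End PosetKey.

Section TwoPlusTwoFree.
Variables (n : nat) (R : {set 'I_n * 'I_n}).
Hypotheses (R_po : is_partial_order R) (R_2p2 : two_plus_two_free R).

Lemma rle_rlt_trans x y z : rle R x y -> rlt R y z -> rlt R x z.
Proof.
case: R_po => _ anti tr le_xy /andP[ne_yz le_yz]; rewrite /rlt (tr _ _ _ le_xy le_yz) andbT.
by apply: contraNneq ne_yz => eq_xz; apply/eqP/(anti _ _ le_yz); rewrite -eq_xz.
Qed.

Lemma rlt_rle_trans x y z : rlt R x y -> rle R y z -> rlt R x z.
Proof.
case: R_po => _ anti tr /andP[ne_xy le_xy] le_yz; rewrite /rlt (tr _ _ _ le_xy le_yz) andbT.
by apply: contraNneq ne_xy => eq_xz; apply/eqP/(anti _ _ le_xy); rewrite eq_xz.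
Qed.

Lemma up_set_chain x x' : up_set R x \subset up_set R x' \/ up_set R x' \subset up_set R x.
Proof.
case: (boolP (up_set R x \subset up_set R x')) => [|/subsetPn[y]]; first by left.
rewrite !inE => lt_xy nlt_x'y; right; apply/subsetP => y'; rewrite !inE => lt_x'y'.
(* Otherwise x < y and x' < y' form an induced 2+2. *)
apply/negPn/negP => nlt_xy'; case: R_po => R_refl _ _.
have rleN a b : rlt R a b -> rle R a b by case/andP.
have nle_xx' : ~~ rle R x x' by apply: contra nlt_xy' => /rle_rlt_trans; apply.
have nle_x'x : ~~ rle R x' x by apply: contra nlt_x'y => /rle_rlt_trans; apply.
have nle_yx' : ~~ rle R y x'.
  by apply: contra nlt_xy' => /(rlt_rle_trans lt_xy)/rleN/rle_rlt_trans; apply.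
have nle_x'y : ~~ rle R x' y.
  apply: contra nlt_x'y => le_x'y; rewrite /rlt le_x'y andbT.
  apply: contraNneq nlt_xy' => eq_x'y; rewrite -eq_x'y in lt_xy.
  exact: rlt_rle_trans lt_xy (rleN _ _ lt_x'y').
have nle_xy' : ~~ rle R x y'.
  apply: contra nlt_xy' => le_xy'; rewrite /rlt le_xy' andbT.
  apply: contraNneq nlt_x'y => eq_xy'; rewrite -eq_xy' in lt_x'y'.
  exact: rlt_rle_trans lt_x'y' (rleN _ _ lt_xy).
have nle_y'x : ~~ rle R y' x.
  by apply: contra nlt_x'y => /(rlt_rle_trans lt_x'y')/rleN/rle_rlt_trans; apply.
have nle_yy' : ~~ rle R y y' by apply: contra nlt_xy' => /(rlt_rle_trans lt_xy).
have nle_y'y : ~~ rle R y' y by apply: contra nlt_x'y => /(rlt_rle_trans lt_x'y').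
have neq a b : ~~ rle R a b -> a != b by apply: contraNneq => ->; apply: R_refl.
apply: R_2p2; exists x, y, x', y'; split => //.
  rewrite /= !inE !negb_or (neq _ _ nle_xx') (neq _ _ nle_xy') (neq _ _ nle_yx').
  by rewrite (neq _ _ nle_yy') (andP lt_xy).1 (andP lt_x'y').1.
by rewrite /rcomparable !negb_or nle_xx' nle_x'x nle_xy' nle_y'x nle_yx' nle_x'y nle_yy' nle_y'y.
Qed.

Lemma rlt_card x y : rlt R x y = (#|down_superset R y| <= #|up_set R x|)%N.
Proof.
case: (boolP (rlt R x y)) => [lt_xy | nlt_xy]; apply/esym.
  apply/subset_leq_card/subsetP => y'; rewrite !inE => /subsetP sub_y'.
  by have := sub_y' x; rewrite !inE; apply.
apply/negbTE; rewrite -ltnNge; apply: proper_card; apply/properP; split.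
  apply/subsetP => y'; rewrite !inE => lt_xy'; apply/subsetP => z; rewrite !inE => lt_zy.
  case: (up_set_chain z x) => /subsetP sub; last by have := sub y'; rewrite !inE; apply.
  by have := sub y; rewrite !inE lt_zy (negbTE nlt_xy) => /(_ isT).
by exists y; rewrite !inE ?subxx.
Qed.

End TwoPlusTwoFree.

Section GoodPoset.
Variables (n : nat) (R : {set 'I_n * 'I_n}).
Hypothesis R_good : good_poset R.

Notation key := (poset_key R).
Notation lab := ((poset_position R)^-1)%g.

Lemma rlt_no_lower x y : rlt R x y -> ~~ has_lower R x.
Proof.
case: R_good => _ _ R_3 _ lt_xy; apply/existsP => -[z lt_zx]; apply: R_3.
by exists z, x, y.
Qed.

Lemma rlt_key x y : ~~ has_lower R x -> has_lower R y -> rlt R x y = (key x < key y)%N.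
Proof. by case: R_good => R_po _ _ R_2p2 hx hy; rewrite rlt_card // ltn_key_lower_upper. Qed.

Lemma key_lab_adjacent (i j : 'I_n) x : val j = (val i).+1 ->
  (key (lab i) < key x)%N -> (key x < key (lab j))%N -> False.
Proof.
move=> /= ij; rewrite -!ltn_poset_position !permKV ij.
by move: (nat_of_ord _) => k lt_ik; rewrite ltnS leqNgt lt_ik.
Qed.

Lemma ltn_key_lab i j : (key (lab i) < key (lab j))%N = (i < j)%N.
Proof. by rewrite -ltn_poset_position !permKV. Qed.

Lemma word_of_poset_good : good_word (word_of_poset R).
Proof.
split => /= [i i0 | i j ij | i j ij | i j lt_ij]; rewrite !ffunE.
- apply/negbTE/existsP => -[z lt_z].
  have : (key z < key (lab i))%N.
    by rewrite -rlt_key ?(rlt_no_lower lt_z) ?(rlt_has_lower lt_z).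
  by rewrite -ltn_poset_position permKV /= i0.
- move=> /negbT hi /negbT hj; have := ltn_key_lab i j.
  rewrite ij ltnSn ltn_key_lower // => /orP[lt_card | /andP[] //]; exfalso.
  have /subsetPn[y] : ~~ (up_set R (lab i) \subset up_set R (lab j)).
    by apply: contraTN lt_card => /subset_leq_card; rewrite -leqNgt.
  rewrite !inE => lt_iy nlt_jy; have hy := rlt_has_lower lt_iy.
  apply: (key_lab_adjacent ij (x := y)); first by rewrite -rlt_key.
  rewrite ltn_poset_keyNge -?rlt_key //.
  by apply: contraNneq hj => ->.
- move=> hi hj; have := ltn_key_lab i j.
  rewrite ij ltnSn ltn_key_upper // => /orP[lt_card | /andP[] //]; exfalso.
  have /subsetPn[z] : ~~ (down_set R (lab j) \subset down_set R (lab i)).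
    apply: contraTN lt_card => sub_ji; rewrite -leqNgt; apply: subset_leq_card.
    by apply/subsetP => y; rewrite !inE; apply: subset_trans.
  rewrite !inE => lt_zj nlt_zi; have hz := rlt_no_lower lt_zj.
  apply: (key_lab_adjacent ij (x := z)); last by rewrite -rlt_key.
  rewrite ltn_poset_keyNge -?rlt_key //.
  by apply: contraNneq hz => ->.
- move=> /negbT hi hj; case: R_good => _ R_nat _ _; apply: R_nat.
  by rewrite rlt_key // ltn_key_lab.
Qed.

End GoodPoset.

Definition poset_of_word n (p : labelled_word n) : {set 'I_n * 'I_n} :=
  [set xy | (xy.1 == xy.2) ||
            [&& ~~ p.1 (p.2^-1 xy.1), p.1 (p.2^-1 xy.2) & (p.2^-1 xy.1 < p.2^-1 xy.2)%N]]%g.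

Section WordPoset.
Variables (n : nat) (p : labelled_word n).

Notation w := p.1.
Notation lab := p.2.
Notation pos := (lab^-1)%g.
Notation R := (poset_of_word p).
Notation key := (poset_key R).

Lemma rle_poset_of_word x y :
  rle R x y = (x == y) || [&& ~~ w (pos x), w (pos y) & (pos x < pos y)%N].
Proof. by rewrite /rle inE. Qed.

Lemma rlt_poset_of_word x y : rlt R x y = [&& ~~ w (pos x), w (pos y) & (pos x < pos y)%N].
Proof. by rewrite /rlt rle_poset_of_word; case: eqP => [->|]; rewrite ?ltnn ?andbF. Qed.

Hypothesis p_good : good_word p.

Lemma poset_of_word_good : good_poset R.
Proof.
case: p_good => _ _ _ w_01; split.
- split => [x | x y | x y z]; rewrite !rle_poset_of_word ?eqxx //.
    case/orP=> [/eqP -> // | /and3P[_ _ lt_xy]] /orP[/eqP -> // | /and3P[_ _ lt_yx]].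
    by have := ltn_trans lt_xy lt_yx; rewrite ltnn.
  case/orP=> [/eqP -> // | /and3P[wx wy lt_xy]] /orP[/eqP <- | /and3P[]]; last by rewrite wy.
  by rewrite wx wy lt_xy orbT.
- move=> x y; rewrite rlt_poset_of_word => /and3P[/negbTE wx wy lt_xy].
  by have := w_01 _ _ lt_xy wx wy; rewrite !permKV.
- case=> x [y [z []]]; rewrite !rlt_poset_of_word.
  by case/and3P => _ -> _; case/and3P => /negP.
- case=> i [j [k [l [_ lt_ij lt_kl [nc_ik nc_il nc_jk nc_jl]]]]].
  move: lt_ij lt_kl; rewrite !rlt_poset_of_word => /and3P[wi wj pij] /and3P[wk wl pkl].
  case: (ltngtP (pos i) (pos k)) => [pik | pki | /ord_inj/perm_inj eq_ik].
  + by move: nc_il; rewrite /rcomparable rle_poset_of_word wi wl (ltn_trans pik pkl) !orbT.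
  + by move: nc_jk; rewrite /rcomparable (rle_poset_of_word k j) wk wj (ltn_trans pki pij) !orbT.
  + by move: nc_ik; rewrite eq_ik /rcomparable rle_poset_of_word eqxx.
Qed.

Lemma has_lower_poset_of_word x : has_lower R x = w (pos x).
Proof.
case: p_good => w_first _ _ _; apply/existsP/idP => [[z] | wx].
  by rewrite rlt_poset_of_word => /and3P[].
have pos_gt0 : (0 < pos x)%N by rewrite lt0n; apply: contraTneq wx => /w_first ->.
exists (lab (Ordinal (leq_ltn_trans (leq0n _) (ltn_ord (pos x))))).
by rewrite rlt_poset_of_word permK wx w_first.
Qed.

Lemma ltn_key_zeros x y : (pos x < pos y)%N -> ~~ w (pos x) -> ~~ w (pos y) ->
  (key x < key y)%N.
Proof.
case: p_good => _ w_00 _ _ lt_xy wx wy.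
have sub_yx : up_set R y \subset up_set R x.
  apply/subsetP => z; rewrite !inE !rlt_poset_of_word => /and3P[_ wz lt_yz].
  by rewrite wx wz (ltn_trans lt_xy lt_yz).
rewrite ltn_key_lower ?has_lower_poset_of_word //.
case: (run_or_gap (P := fun k => ~~ w k) wx wy) => [[k [lt_xk lt_ky /negPn wk]] | zeros].
  apply/orP; left; apply: proper_card; apply/properP; split => //.
  by exists (lab k); rewrite !inE !rlt_poset_of_word permK wk ?wx ?wy //= -leqNgt ltnW.
have lt_yx : (y < x)%N.
  rewrite -[x](permKV lab) -[y](permKV lab).
  apply: (run_trans (r := fun a b : 'I_n => (b < a)%N)) lt_xy zeros.
    by move=> a b c lt_ba lt_cb; apply: ltn_trans lt_cb lt_ba.
  by move=> a b ab /negbTE wa /negbTE wb; apply: w_00.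
have := subset_leq_card sub_yx; rewrite leq_eqVlt => /orP[/eqP -> | ->] //.
by rewrite eqxx lt_yx orbT.
Qed.

Lemma ltn_key_ones x y : (pos x < pos y)%N -> w (pos x) -> w (pos y) ->
  (key x < key y)%N.
Proof.
case: p_good => _ _ w_11 _ lt_xy wx wy.
have sub_xy : down_set R x \subset down_set R y.
  apply/subsetP => z; rewrite !inE !rlt_poset_of_word => /and3P[wz _ lt_zx].
  by rewrite wy wz (ltn_trans lt_zx lt_xy).
have sub_yx : down_superset R y \subset down_superset R x.
  by apply/subsetP => z; rewrite !inE; apply: subset_trans.
rewrite ltn_key_upper ?has_lower_poset_of_word //.
case: (run_or_gap wx wy) => [[k [lt_xk lt_ky /negbTE wk]] | ones].
  apply/orP; left; apply: proper_card; apply/properP; split => //.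
  exists x; rewrite !inE ?subxx //; apply/subsetPn; exists (lab k).
    by rewrite inE rlt_poset_of_word permK wk wy.
  by rewrite inE rlt_poset_of_word permK wk wx /= -leqNgt ltnW.
have lt_xy' : (x < y)%N.
  rewrite -[x](permKV lab) -[y](permKV lab).
  apply: (run_trans (r := fun a b : 'I_n => (a < b)%N)) lt_xy ones.
    by move=> a b c; apply: ltn_trans.
  by move=> a b ab wa wb; apply: w_11.
have := subset_leq_card sub_yx; rewrite leq_eqVlt => /orP[/eqP -> | ->] //.
by rewrite eqxx lt_xy' orbT.
Qed.

Lemma ltn_key_poset_of_word x y : (pos x < pos y)%N -> (key x < key y)%N.
Proof.
have R_good := poset_of_word_good.
move=> lt_xy; case wx: (w (pos x)); case wy: (w (pos y)).
- by apply: ltn_key_ones; rewrite ?wx ?wy.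
- have ne_yx : y != x by apply: contraTneq lt_xy => ->; rewrite ltnn.
  rewrite ltn_poset_keyNge // -rlt_key ?has_lower_poset_of_word ?wx ?wy //.
  by rewrite rlt_poset_of_word wx wy /= -leqNgt ltnW.
- by rewrite -rlt_key ?has_lower_poset_of_word ?wx ?wy // rlt_poset_of_word wx wy.
- by apply: ltn_key_zeros; rewrite ?wx ?wy.
Qed.

Lemma poset_position_of_word : poset_position R = pos.
Proof. exact: rank_perm_unique ltn_key_poset_of_word. Qed.

Lemma word_of_poset_of_word : word_of_poset R = p.
Proof.
rewrite /word_of_poset poset_position_of_word invgK [RHS]surjective_pairing; congr pair.
by apply/ffunP => i; rewrite ffunE has_lower_poset_of_word permK.
Qed.

End WordPoset.

Lemma poset_of_word_of_poset n (R : {set 'I_n * 'I_n}) :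
  good_poset R -> poset_of_word (word_of_poset R) = R.
Proof.
move=> R_good; apply/setP => -[x y]; rewrite inE /= invgK !ffunE !permK.
case: eqP => [<- | /eqP ne_xy] /=.
  by case: R_good => -[R_refl _ _] _ _ _; apply/esym/R_refl.
have -> : ((x, y) \in R) = rlt R x y by rewrite /rlt ne_xy.
rewrite ltn_poset_position.
case hx: (has_lower R x); first by apply/esym/negP => /(rlt_no_lower R_good); rewrite hx.
case hy: (has_lower R y); last by apply/esym/negP => /rlt_has_lower; rewrite hy.
by rewrite rlt_key ?hx ?hy.
Qed.

Theorem proposition7 (n : nat) (hn : (1 <= n)%N) :
  exists f : {R : {set 'I_n * 'I_n} | good_poset R} ->
             {p : labelled_word n | good_word p},
    bijective f.
Proof.
exists (fun R => exist _ (word_of_poset (sval R)) (word_of_poset_good (svalP R))).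
exists (fun p => exist _ (poset_of_word (sval p)) (poset_of_word_good (svalP p))).
- case=> R R_good; apply: eq_sig_hprop => [? ? ?|]; first exact: proof_irrelevance.
  exact: poset_of_word_of_poset.
- case=> p p_good; apply: eq_sig_hprop => [? ? ?|]; first exact: proof_irrelevance.
  exact: word_of_poset_of_word.
Qed.
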